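(* Fix a constant $\Delta$. There is no LCL problem on trees of maximum degree at most $\Delta$ with mending radius between $\omega(1)$ and $o(\log n)$: if such an LCL problem $\Pi$ is $T$-mendable for some function $T$ with $T(n)=o(\log n)$, then $\Pi$ is $T'$-mendable for some constant function $T'$.
   Context: A locally verifiable problem $\Pi$ on a graph family $\mathcal{G}$ is given by a set $\Sigma$ of input labels, a set $\Gamma$ of output labels and a verifier $\psi$ with verification radius $r$: $\psi(G,\lambda,v)\in\{\text{happy},\text{unhappy}\}$ depends only on the radius-$r$ neighborhood of $v$ (structure, inputs and outputs, up to isomorphism); $\lambda:V\to\Gamma$ is a solution if $\psi$ is happy everywhere. $\Pi$ is an LCL problem if $\Sigma,\Gamma$ are finite and all graphs in $\mathcal{G}$ have maximum degree bounded by a constant. Partial labelings are maps $\lambda:V\to\Gamma\cup\{\bot\}$; the relaxed verifier $\psi^*$ is happy at $v$ if some node within distance $r$ of $v$ has label $\bot$, and otherwise $\psi^*(G,\lambda,v)=\psi(G,\lambda',v)$ for any $\lambda':V\to\Gamma$ agreeing with $\lambda$ on the radius-$r$ neighborhood of $v$; $\psi^*$ accepts $\lambda$ if happy everywhere. Given $\lambda$ accepted by $\psi^*$ and node $v$, a $t$-mend of $\lambda$ at $v$ is a partial labeling $\mu$ accepted by $\psi^*$ with $\mu(v)\neq\bot$, $\mu(u)=\bot\Rightarrow\lambda(u)=\bot$, and $\mu(u)\neq\lambda(u)\Rightarrow\mathrm{dist}(u,v)\le t$. A verifier is $T$-mendable if for every $G\in\mathcal{G}$ with $n$ nodes, every $\lambda$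 accepted by $\psi^*$ and every node $v$, a $T(n)$-mend at $v$ exists; $\Pi$ is $T$-mendable if some radius-$r$ verifier for $\Pi$ (accepting exactly the solutions of $\Pi$) is $T$-mendable. *)

From Stdlib Require Import Rdefinitions Raxioms RIneq Rpower.
From mathcomp Require Import all_boot.

Set Implicit Arguments.
Unset Strict Implicit.
Unset Printing Implicit Defensive.

Fixpoint ball (V : finType) (e : rel V) (k : nat) (v : V) : {set V} :=
  match k with
  | 0 => [set v]
  | k'.+1 => ball e k' v :|: [set u | [exists w in ball e k' v, e w u]]
  end.

Definition simple_graph (V : finType) (e : rel V) : Prop :=
  symmetric e /\ irreflexive e.

Definition connected (V : finType) (e : rel V) : Prop :=
  forall x y : V, connect e x y.

Definition acyclic (V : finType) (e : rel V) : Prop :=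
  forall c : seq V, uniq c -> 3 <= size c -> ~~ cycle e c.

Definition is_tree (V : finType) (e : rel V) : Prop :=
  simple_graph e /\ connected e /\ acyclic e.

Definition max_degree_le (V : finType) (e : rel V) (Delta : nat) : Prop :=
  forall v : V, #|[set u | e v u]| <= Delta.

Definition in_family (Delta : nat) (V : finType) (e : rel V) : Prop :=
  is_tree e /\ max_degree_le e Delta.

(* psi V e inp out v = true  means  "v is happy" *)
Definition verifier (Sigma Gamma : Type) : Type :=
  forall V : finType, rel V -> (V -> Sigma) -> (V -> Gamma) -> V -> bool.

Definition ball_iso (Sigma Gamma : Type) (r : nat)
  (V : finType) (e : rel V) (inp : V -> Sigma) (out : V -> Gamma) (v : V)
  (V' : finType) (e' : rel V') (inp' : V' -> Sigma) (out' : V' -> Gamma) (v' : V')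
  (f : V -> V') : Prop :=
  [/\ f v = v',
      {in ball e r v &, injective f},
      f @: ball e r v = ball e' r v',
      {in ball e r v &, forall x y, e' (f x) (f y) = e x y}
    & {in ball e r v, forall x, inp' (f x) = inp x /\ out' (f x) = out x}].

Definition local_verifier (Delta : nat) (Sigma Gamma : Type) (r : nat)
  (psi : verifier Sigma Gamma) : Prop :=
  forall (V : finType) (e : rel V) (inp : V -> Sigma) (out : V -> Gamma) (v : V)
         (V' : finType) (e' : rel V') (inp' : V' -> Sigma) (out' : V' -> Gamma) (v' : V')
         (f : V -> V'),
    in_family Delta e -> in_family Delta e' ->
    ball_iso r e inp out v e' inp' out' v' f ->
    psi V e inp out v = psi V' e' inp' out' v'.

Definition same_solutions (Delta : nat) (Sigma Gamma : Type)
  (psi psi' : verifier Sigma Gamma) : Prop :=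
  forall (V : finType) (e : rel V) (inp : V -> Sigma) (out : V -> Gamma),
    in_family Delta e ->
    ((forall v, psi V e inp out v) <-> (forall v, psi' V e inp out v)).

(* partial labeling: None stands for bot *)
Definition relaxed_happy (Sigma Gamma : Type) (r : nat) (psi : verifier Sigma Gamma)
  (V : finType) (e : rel V) (inp : V -> Sigma) (lam : V -> option Gamma) (v : V) : Prop :=
  (exists2 u, u \in ball e r v & lam u = None) \/
  (forall lam' : V -> Gamma,
     (forall u, u \in ball e r v -> lam u = Some (lam' u)) -> psi V e inp lam' v).

Definition relaxed_accepts (Sigma Gamma : Type) (r : nat) (psi : verifier Sigma Gamma)
  (V : finType) (e : rel V) (inp : V -> Sigma) (lam : V -> option Gamma) : Prop :=
  forall v, relaxed_happy r psi e inp lam v.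

Definition is_mend (Sigma Gamma : Type) (r : nat) (psi : verifier Sigma Gamma)
  (V : finType) (e : rel V) (inp : V -> Sigma) (lam mu : V -> option Gamma)
  (v : V) (t : nat) : Prop :=
  [/\ relaxed_accepts r psi e inp mu,
      mu v <> None,
      (forall u, mu u = None -> lam u = None)
    & (forall u, mu u <> lam u -> u \in ball e t v)].

Definition verifier_mendable (Delta : nat) (Sigma Gamma : Type) (r : nat)
  (psi : verifier Sigma Gamma) (T : nat -> nat) : Prop :=
  forall (V : finType) (e : rel V) (inp : V -> Sigma) (lam : V -> option Gamma) (v : V),
    in_family Delta e ->
    relaxed_accepts r psi e inp lam ->
    exists mu, is_mend r psi e inp lam mu v (T #|V|).

Definition problem_mendable (Delta : nat) (Sigma Gamma : Type) (r : nat)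
  (psi : verifier Sigma Gamma) (T : nat -> nat) : Prop :=
  exists psi' : verifier Sigma Gamma,
    [/\ local_verifier Delta r psi', same_solutions Delta psi psi'
      & verifier_mendable Delta r psi' T].

Definition little_o_log (T : nat -> nat) : Prop :=
  forall eps : R, Rlt R0 eps ->
    exists N : nat, forall n : nat, N <= n ->
      Rle (INR (T n)) (Rmult eps (ln (INR n))).

From mathcomp Require Import all_boot.
From Stdlib Require Import Rdefinitions Raxioms RIneq Rfunctions Rpower Lra.
(* Stdlib's Arith rebinds [^] on [nat] to [Nat.pow]; restore [expn]. *)
Import ssrnat.

Set Implicit Arguments.
Unset Strict Implicit.
Unset Printing Implicit Defensive.

(** Since [T(n) = o(log n)], there is a constant [c] with [T(n) <= c] for every
    [n <= (Delta+1)^(c+3r)], a bound on the size of a ball of radius [c+3r].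
    To mend a partial labeling at [v], keep it only on the ball of radius
    [c+2r] around [v] (making it undefined further out) and look at it inside
    the tree induced by the ball of radius [c+3r]. This small tree has a
    [T]-mend, hence a [c]-mend, at [v]; copying it back on the radius-[c] ball
    around [v] yields a [c]-mend in the whole tree, because any node whose
    radius-[r] view meets the copied region sees exactly what it saw in the
    small tree, and the verifier is local. *)

Lemma card_bigcup_leq (I T : finType) (A : {set I}) (F : I -> {set T}) :
  #|\bigcup_(i in A) F i| <= \sum_(i in A) #|F i|.
Proof.
elim/big_rec2: _ => [|i S n _ le_Sn]; first by rewrite cards0.
exact: leq_trans (leq_card_setU _ _).1 (leq_add _ le_Sn).
Qed.

Section Balls.

Variables (V : finType) (e : rel V).

Lemma in_ballS k v u :
  (u \in ball e k.+1 v) = (u \in ball e k v) || [exists w in ball e k v, e w u].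
Proof. by rewrite /= in_setU in_set. Qed.

Lemma ball_center k v : v \in ball e k v.
Proof. by elim: k => [|k IHk]; rewrite ?in_set1 // in_ballS IHk. Qed.

Lemma ball_edge k v u w : u \in ball e k v -> e u w -> w \in ball e k.+1 v.
Proof.
move=> u_in euw; rewrite in_ballS; apply/orP; right.
by apply/existsP; exists u; rewrite u_in.
Qed.

Lemma subset_ballS k v : ball e k v \subset ball e k.+1 v.
Proof. by apply/subsetP => u u_in; rewrite in_ballS u_in. Qed.

Lemma subset_ball k m v : k <= m -> ball e k v \subset ball e m v.
Proof.
move=> /subnK <-; elim: (m - k) => [|d IHd]; first by rewrite add0n.
exact: subset_trans IHd (subset_ballS _ _).
Qed.

Lemma ball_trans k m v u w :
  u \in ball e k v -> w \in ball e m u -> w \in ball e (k + m) v.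
Proof.
move=> u_in; elim: m w => [|m IHm] w; first by rewrite addn0 in_set1 => /eqP ->.
rewrite addnS in_ballS => /orP[w_in | /existsP[x /andP[x_in exw]]].
  exact: subsetP (subset_ballS _ _) _ (IHm _ w_in).
exact: ball_edge (IHm _ x_in) exw.
Qed.

Lemma ball_sym k v u : symmetric e -> u \in ball e k v -> v \in ball e k u.
Proof.
move=> e_sym; elim: k u => [|k IHk] u; first by rewrite !in_set1 eq_sym.
rewrite in_ballS => /orP[u_in | /existsP[x /andP[x_in exu]]].
  exact: subsetP (subset_ballS _ _) _ (IHk _ u_in).
have x_near_u : x \in ball e 1 u by apply: ball_edge (ball_center 0 u) _; rewrite e_sym.
by rewrite -add1n; apply: ball_trans x_near_u (IHk _ x_in).
Qed.

Lemma card_ball Delta k v : max_degree_le e Delta -> #|ball e k v| <= Delta.+1 ^ k.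
Proof.
move=> deg_e; elim: k => [|k IHk]; first by rewrite cards1.
rewrite /= expnS mulSn; apply: leq_trans (leq_card_setU _ _).1 (leq_add IHk _).
have -> : [set u | [exists w in ball e k v, e w u]] =
          \bigcup_(w in ball e k v) [set u | e w u].
  apply/setP => u; rewrite inE; apply/existsP/bigcupP => [[w /andP[]] | [w]].
    by exists w; rewrite ?inE.
  by rewrite inE; exists w; apply/andP.
apply: leq_trans (card_bigcup_leq _ _) _.
apply: leq_trans (_ : \sum_(w in ball e k v) Delta <= _).
  exact: leq_sum.
by rewrite sum_nat_const mulnC leq_mul2l IHk orbT.
Qed.

End Balls.

Definition induced (V : finType) (e : rel V) (B : {set V}) : rel {u | u \in B} :=
  fun x y => e (val x) (val y).
Arguments induced {V} e B x y.

Section InducedSubgraph.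

Variables (V : finType) (e : rel V) (B : {set V}).

Local Notation VB := {u | u \in B}.
Local Notation eB := (induced e B).

Lemma in_induced_ball k (x y : VB) :
  ball e k (val x) \subset B -> (y \in ball eB k x) = (val y \in ball e k (val x)).
Proof.
elim: k y => [|k IHk] y ballB; first by rewrite !in_set1 val_eqE.
have ballB' := subset_trans (subset_ballS _ _ _) ballB.
rewrite !in_ballS IHk //; congr (_ || _).
apply/existsP/existsP => [[w /andP[w_in ewy]] | [w /andP[w_in ewy]]].
  by exists (val w); rewrite -IHk // w_in.
by exists (Sub w (subsetP ballB' _ w_in)); rewrite IHk //= w_in.
Qed.

Lemma induced_ball_imset k (x : VB) :
  ball e k (val x) \subset B -> val @: ball eB k x = ball e k (val x).
Proof.
move=> ballB; apply/setP => z; apply/imsetP/idP => [[y y_in ->] | z_in].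
  by rewrite -in_induced_ball.
by exists (Sub z (subsetP ballB _ z_in)); rewrite ?in_induced_ball.
Qed.

Lemma connect_induced_ball k v (vB : v \in B) (y : VB) :
  ball e k v \subset B -> val y \in ball e k v -> connect eB (Sub v vB) y.
Proof.
elim: k y => [|k IHk] y ballB.
  by rewrite in_set1 => /eqP y_v; rewrite (_ : y = Sub v vB) //; apply: val_inj.
have ballB' := subset_trans (subset_ballS _ _ _) ballB.
rewrite in_ballS => /orP[y_in | /existsP[w /andP[w_in ewy]]]; first exact: IHk.
have wB := subsetP ballB' _ w_in.
exact: connect_trans (IHk (Sub w wB) ballB' w_in) (connect1 ewy).
Qed.

End InducedSubgraph.

Lemma induced_ball_in_family Delta (V : finType) (e : rel V) R v :
  in_family Delta e -> in_family Delta (induced e (ball e R v)).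
Proof.
move=> [[[e_sym e_irr] [_ e_acyclic]] deg_e].
set B := ball e R v.
have eB_sym : symmetric (induced e B) by move=> x y; rewrite /induced e_sym.
have from_v y : connect (induced e B) (Sub v (ball_center e R v)) y.
  exact: connect_induced_ball (subxx _) (valP y).
split; [split; [split | split] |].
- exact: eB_sym.
- by move=> x; rewrite /induced e_irr.
- by move=> x y; apply: connect_trans (from_v y); rewrite (sym_connect_sym eB_sym).
- move=> c c_uniq c_size; have := e_acyclic (map val c); rewrite cycle_map; apply.
    by rewrite map_inj_uniq //; apply: val_inj.
  by rewrite size_map.
- move=> x; apply: leq_trans (deg_e (val x)).
  rewrite -(card_imset _ val_inj); apply: subset_leq_card.
  by apply/subsetP => z /imsetP[y]; rewrite !inE => exy ->.
Qed.

Section RelaxedHappiness.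

Variables (Delta : nat) (Sigma Gamma : Type) (r : nat) (psi : verifier Sigma Gamma).

Lemma relaxed_happy_eq_ball (V : finType) (e : rel V) inp
    (lam1 lam2 : V -> option Gamma) w :
  {in ball e r w, lam1 =1 lam2} ->
  relaxed_happy r psi e inp lam1 w -> relaxed_happy r psi e inp lam2 w.
Proof.
move=> eq_lam [[u u_in lam_u] | happy1]; first by left; exists u; rewrite -?eq_lam.
by right => l eq_l; apply: happy1 => u u_in; rewrite eq_lam ?eq_l.
Qed.

Hypothesis psi_local : local_verifier Delta r psi.

Lemma relaxed_happy_iso
    (V : finType) (e : rel V) inp (lam : V -> option Gamma) (w : V)
    (V' : finType) (e' : rel V') inp' (lam' : V' -> option Gamma) (w' : V') (f : V -> V') :
  in_family Delta e -> in_family Delta e' ->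
  f w = w' -> {in ball e r w &, injective f} -> f @: ball e r w = ball e' r w' ->
  {in ball e r w &, forall x y, e' (f x) (f y) = e x y} ->
  {in ball e r w, forall x, inp' (f x) = inp x} ->
  {in ball e r w, forall x, lam' (f x) = lam x} ->
  relaxed_happy r psi e inp lam w <-> relaxed_happy r psi e' inp' lam' w'.
Proof.
move=> fam fam' fw f_inj f_ball f_edge f_inp f_lam.
have f_in x : x \in ball e r w -> f x \in ball e' r w' by rewrite -f_ball; apply: imset_f.
split=> [[[u u_in lam_u] | happy]|[[u' + lam_u'] | happy']].
- by left; exists (f u); rewrite ?f_in ?f_lam.
- right => l' eq_l'.
  have eq_l u : u \in ball e r w -> lam u = Some (l' (f u)).
    by move=> u_in; rewrite -f_lam // eq_l' ?f_in.
  rewrite -(@psi_local _ e inp (l' \o f) w _ e' inp' l' w' f) //; first exact: happy eq_l.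
  by split=> // x x_in; rewrite f_inp.
- rewrite -f_ball => /imsetP[u u_in u'_fu]; left; exists u => //.
  by rewrite -f_lam // -u'_fu.
- right => l eq_l.
  (* extend [l] along the inverse of [f] on the ball *)
  pose l' y := if [pick x in ball e r w | f x == y] is Some x then l x else l w.
  have l'_f x : x \in ball e r w -> l' (f x) = l x.
    move=> x_in; rewrite /l'; case: pickP => [x' /andP[x'_in /eqP fx'x] | /(_ x)].
      by rewrite (f_inj _ _ x'_in x_in fx'x).
    by rewrite x_in eqxx.
  have eq_l' u : u \in ball e' r w' -> lam' u = Some (l' u).
    by rewrite -f_ball => /imsetP[x x_in ->]; rewrite f_lam // l'_f // eq_l.
  rewrite (@psi_local _ e inp l w _ e' inp' l' w' f) //; first exact: happy' eq_l'.
  by split=> // x x_in; rewrite f_inp // l'_f.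
Qed.

Lemma relaxed_happy_induced (V : finType) (e : rel V) inp (lam : V -> option Gamma)
    (B : {set V}) (lamB : {u | u \in B} -> option Gamma) (w : {u | u \in B}) :
  in_family Delta e -> in_family Delta (induced e B) ->
  ball e r (val w) \subset B ->
  {in ball (induced e B) r w, forall y, lamB y = lam (val y)} ->
  relaxed_happy r psi (induced e B) (inp \o val) lamB w <->
  relaxed_happy r psi e inp lam (val w).
Proof.
move=> fam famB ballB eq_lam.
apply: relaxed_happy_iso => //; first by move=> x y _ _; apply: val_inj.
  exact: induced_ball_imset.
by move=> y /eq_lam.
Qed.

End RelaxedHappiness.

Lemma INR_expn m n : INR (m ^ n) = (INR m ^ n)%R.
Proof. by elim: n => // n IHn; rewrite expnS mult_INR IHn. Qed.

Lemma ln_le x y : (0 < x)%R -> (x <= y)%R -> (ln x <= ln y)%R.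
Proof. by move=> x_gt0 [x_lt_y | <-]; [apply/Rlt_le/ln_increasing | apply: Rle_refl]. Qed.

Lemma little_o_log_bounded_on_powers (T : nat -> nat) (b k : nat) :
  little_o_log T -> exists c, forall n, 0 < n -> n <= b.+1 ^ (c + k) -> T n <= c.
Proof.
move=> T_o_log.
pose L := ln (INR b.+1).
have L_ge0 : (0 <= L)%R.
  by rewrite -ln_1; apply: ln_le; [lra | apply: (le_INR 1); apply/leP].
(* with this [eps], [T n <= eps * ln n <= (c + k) / 2 <= c] once [n] is large *)
pose eps := (/ (2 * (L + 1)))%R.
have eps_gt0 : (0 < eps)%R by apply: Rinv_0_lt_compat; lra.
have epsL_le : (eps * L <= / 2)%R.
  have eps_L1 : (eps * (L + 1) = / 2)%R by rewrite /eps; field; lra.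
  lra.
have [N TN] := T_o_log eps eps_gt0.
exists (maxn (\max_(i < N) T i) k) => n n_gt0 n_le; set c := maxn _ _ in n_le *.
have [n_lt_N | N_le_n] := ltnP n N.
  exact: leq_trans (leq_bigmax (Ordinal n_lt_N)) (leq_maxl _ _).
have n_gt0R : (0 < INR n)%R by apply: (lt_INR 0); apply/ltP.
have ln_n_le : (ln (INR n) <= INR (c + k) * L)%R.
  rewrite -ln_pow; last by apply: (lt_INR 0); apply/ltP.
  by rewrite -INR_expn; apply: ln_le => //; apply/le_INR/leP.
have k_le_c : (INR k <= INR c)%R by apply/le_INR/leP/leq_maxr.
have ck_ge0 : (0 <= INR c + INR k)%R by apply: Rplus_le_le_0_compat; apply: pos_INR.
rewrite plus_INR in ln_n_le.
apply/leP/INR_le; have := TN n N_le_n.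
nra.
Qed.

Lemma is_mend_le (Sigma Gamma : Type) r (psi : verifier Sigma Gamma)
    (V : finType) (e : rel V) inp (lam mu : V -> option Gamma) v t t' :
  t <= t' -> is_mend r psi e inp lam mu v t -> is_mend r psi e inp lam mu v t'.
Proof.
move=> le_tt' [acc mu_v mu_bot mu_diff]; split=> // u.
by move/mu_diff/(subsetP (subset_ball e v le_tt')).
Qed.

Section MendInsideBall.

Variables (Delta : nat) (Sigma : Type) (Gamma : eqType) (r : nat).
Variable psi : verifier Sigma Gamma.
Hypothesis psi_local : local_verifier Delta r psi.

Variables (V : finType) (e : rel V) (inp : V -> Sigma) (lam : V -> option Gamma).
Variables (v : V) (c : nat).
Hypotheses (fam : in_family Delta e) (lam_acc : relaxed_accepts r psi e inp lam).

Let B := ball e (c + 3 * r) v.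
Let eB := induced e B.
Let inpB := inp \o val : {u | u \in B} -> Sigma.
Let lamB (y : {u | u \in B}) :=
  if val y \in ball e (c + 2 * r) v then lam (val y) else None.
Let vB : {u | u \in B} := Sub v (ball_center e _ v).

Let e_sym : symmetric e. Proof. by case: fam => [[[]]]. Qed.

Let famB : in_family Delta eB. Proof. exact: induced_ball_in_family. Qed.

Let ball_c2r_sub : ball e (c + 2 * r) v \subset B.
Proof. by apply: subset_ball; rewrite leq_add2l leq_mul2r orbT. Qed.

Let ball_c_sub : ball e c v \subset ball e (c + 2 * r) v.
Proof. exact/subset_ball/leq_addr. Qed.

Lemma relaxed_accepts_restricted : relaxed_accepts r psi eB inpB lamB.
Proof.
move=> w; have [/existsP[y /andP[y_in y_out]] | /existsPn all_in] :=
  boolP [exists y in ball eB r w, val y \notin ball e (c + 2 * r) v].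
  by left; exists y; rewrite // /lamB (negbTE y_out).
have {}all_in y : y \in ball eB r w -> val y \in ball e (c + 2 * r) v.
  by move=> y_in; move: (all_in y); rewrite y_in negbK.
have ball_w_sub : ball e r (val w) \subset B.
  apply/subsetP => z z_in; rewrite /B (mulSnr 2) addnA.
  exact: ball_trans (all_in _ (ball_center _ _ _)) z_in.
apply/(relaxed_happy_induced psi_local _ fam famB ball_w_sub) => [y y_in | ].
  by rewrite /lamB all_in.
exact: lam_acc.
Qed.

Variable muB : {u | u \in B} -> option Gamma.
Hypothesis muB_mend : is_mend r psi eB inpB lamB muB vB c.

Let mu x := if x \in ball e c v then muB (insubd vB x) else lam x.

Let muB_val y : val y \in ball e (c + 2 * r) v -> muB y = mu (val y).
Proof.
case: muB_mend => _ _ _ muB_diff y_in; rewrite /mu.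
case: ifP => [_ | y_out]; first by rewrite valKd.
have -> : muB y = lamB y.
  apply/eqP/negPn/negP => /eqP/muB_diff.
  by rewrite in_induced_ball ?y_out // (subset_trans ball_c_sub ball_c2r_sub).
by rewrite /lamB y_in.
Qed.

Lemma is_mend_transplant : is_mend r psi e inp lam mu v c.
Proof.
have [muB_acc muB_v muB_bot _] := muB_mend.
split.
- move=> w; have [/existsP[u /andP[u_near u_in]] | /existsPn far] :=
    boolP [exists u in ball e r w, u \in ball e c v]; last first.
    apply: relaxed_happy_eq_ball (lam_acc w) => u u_near.
    by have := far u; rewrite u_near /mu /= => /negbTE ->.
  have w_in : w \in ball e (c + r) v := ball_trans u_in (ball_sym e_sym u_near).
  have ball_w_sub : ball e r w \subset ball e (c + 2 * r) v.
    by apply/subsetP => z z_in; rewrite (mulSnr 1) mul1n addnA; exact: ball_trans w_in z_in.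
  have wB : w \in B by apply/(subsetP ball_c2r_sub)/(subsetP ball_w_sub)/ball_center.
  have val_wB : val (insubd vB w) = w by rewrite val_insubd wB.
  have ball_wB : ball e r (val (insubd vB w)) \subset B.
    by rewrite val_wB (subset_trans ball_w_sub ball_c2r_sub).
  rewrite -val_wB; apply/(relaxed_happy_induced psi_local (lamB := muB) _ fam famB ball_wB).
    move=> y y_in; apply/muB_val/(subsetP ball_w_sub).
    by rewrite -val_wB -in_induced_ball.
  exact: muB_acc.
- have vB_v : insubd vB v = vB by apply: val_inj; rewrite val_insubd ball_center.
  by rewrite /mu ball_center vB_v.
- move=> u; rewrite /mu; case: ifP => // u_in /muB_bot.
  by rewrite /lamB val_insubd (subsetP ball_c2r_sub) (subsetP ball_c_sub).
- by move=> u; rewrite /mu; case: ifP.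
Qed.

End MendInsideBall.

Lemma verifier_mendable_const (Delta : nat) (Sigma : Type) (Gamma : eqType) r
    (psi : verifier Sigma Gamma) (T : nat -> nat) c :
  local_verifier Delta r psi ->
  (forall n, 0 < n -> n <= Delta.+1 ^ (c + 3 * r) -> T n <= c) ->
  verifier_mendable Delta r psi T -> verifier_mendable Delta r psi (fun=> c).
Proof.
move=> psi_local T_le psi_mendable V e inp lam v fam lam_acc.
set B := ball e (c + 3 * r) v.
have card_B : T #|{: {u | u \in B}}| <= c.
  rewrite card_sig; apply: T_le.
    by apply/card_gt0P; exists v; rewrite inE ball_center.
  by rewrite (eq_card (B := B)) // (card_ball _ _ fam.2).
have [muB muB_mend] := psi_mendable _ _ _ _ (Sub v (ball_center e (c + 3 * r) v))
  (induced_ball_in_family _ _ fam)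
  (relaxed_accepts_restricted psi_local (v := v) (c := c) fam lam_acc).
have /(is_mend_transplant psi_local fam lam_acc) mend := is_mend_le card_B muB_mend.
by eexists; exact: mend.
Qed.

Theorem corollary8p4 (Delta : nat) (Sigma Gamma : finType) (r : nat)
  (psi : verifier Sigma Gamma) (T : nat -> nat) :
  local_verifier Delta r psi ->
  little_o_log T ->
  problem_mendable Delta r psi T ->
  exists c : nat, problem_mendable Delta r psi (fun _ => c).
Proof.
(* the mendable verifier [psi'] is local by itself *)
move=> _ T_o_log [psi' [psi'_local same_sol psi'_mendable]].
have [c T_le] := little_o_log_bounded_on_powers Delta (3 * r) T_o_log.
exists c, psi'; split=> //.
exact: verifier_mendable_const psi'_local T_le psi'_mendable.
Qed.
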